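(* Let $E\subset\mathbb{R}^2$ be a compact, path connected set, let $r>0$, and let $\Gamma^\ast$ be an $r$-maximum distance minimizer of $B(E,r)$. Let $x_0,x_1\in\Gamma^\ast\cap B(E,2r)$. Then there exist $N\ge1$ and points $x_2,\dots,x_N\in\Gamma^\ast\cap B(E,2r)$ such that $|x_j-x_{j+1}|\le4r$ for $j=1,\dots,N$, where $x_{N+1}:=x_0$.
   Context: For $A\subset\mathbb{R}^2$ and $r>0$, $B(A,r):=\{x:\mathrm{dist}(x,A)\le r\}$. A rectifiable curve is the image of a Lipschitz map $[0,1]\to\mathbb{R}^2$. $\Lambda(K,r):=\inf\{\mathcal{H}^1(\Gamma):\Gamma \text{ a rectifiable curve with } B(\Gamma,r)\supset K\}$. An $r$-maximum distance minimizer of $K$ is a rectifiable curve $\Gamma$ with $B(\Gamma,r)\supset K$ and $\mathcal{H}^1(\Gamma)=\Lambda(K,r)$. *)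

(* R : realType, points of R^2 as pairs R * R
   (product topology = Euclidean topology). *)
From HB Require Import structures.
From mathcomp Require Import all_boot all_order all_algebra.
From mathcomp Require Import all_classical all_reals all_analysis.
Set Implicit Arguments. Unset Strict Implicit. Unset Printing Implicit Defensive.
Import Order.TTheory GRing.Theory Num.Theory.
Import numFieldNormedType.Exports.
Local Open Scope classical_set_scope.
Local Open Scope ring_scope.

Section Defs.
Variable R : realType.

Definition eucl_dist (p q : R * R) : R :=
  Num.sqrt ((p.1 - q.1) ^+ 2 + (p.2 - q.2) ^+ 2).

(* dist(x, A) as an extended real (= +oo for A empty) *)
Definition dist_set (x : R * R) (A : set (R * R)) : \bar R :=
  ereal_inf [set (eucl_dist x a)%:E | a in A].

Definition Bnbhd (A : set (R * R)) (r : R) : set (R * R) :=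
  [set x | (dist_set x A <= r%:E)%E].

(* rectifiable curve: image of a Lipschitz map [0,1] -> R^2 *)
Definition rectifiable_curve (G : set (R * R)) : Prop :=
  exists (g : R -> R * R) (L : R),
    (forall s t, s \in `[0, 1] -> t \in `[0, 1] ->
        eucl_dist (g s) (g t) <= L * `|s - t|) /\
    G = g @` `[0, 1].

(* diameter (diam of the empty set is 0) *)
Definition diam (C : set (R * R)) : \bar R :=
  ereal_sup ([set e | exists x y, C x /\ C y /\ e = (eucl_dist x y)%:E] `|` [set 0%E]).

Definition H1delta (A : set (R * R)) (d : R) : \bar R :=
  ereal_inf [set s | exists C : nat -> set (R * R),
     A `<=` \bigcup_i C i /\ (forall i, (diam (C i) <= d%:E)%E) /\
     s = (\sum_(0 <= i <oo) diam (C i))%E].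

Definition H1 (A : set (R * R)) : \bar R :=
  ereal_sup [set H1delta A d | d in [set d : R | 0 < d]].

Definition Lambda (K : set (R * R)) (r : R) : \bar R :=
  ereal_inf [set H1 G | G in [set G | rectifiable_curve G /\ K `<=` Bnbhd G r]].

Definition max_dist_minimizer (K : set (R * R)) (r : R) (G : set (R * R)) : Prop :=
  rectifiable_curve G /\ K `<=` Bnbhd G r /\ H1 G = Lambda K r.

Definition path_connected_set (E : set (R * R)) : Prop :=
  forall x y, E x -> E y ->
    exists g : R -> R * R, {within `[0, 1]%classic, continuous g} /\
      g 0 = x /\ g 1 = y /\ g @` `[0, 1] `<=` E.

End Defs.

(* Follow a path in E from a point of E near x1 to a point of E near x0.
   Every point of E lies within r of G, so each point of the path has a
   point of G within 5r/4, which automatically lies in B(E, 2r).  By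
   continuity, path points whose parameters are close are within r/2 of each
   other, so their nearby points of G are within 3r <= 4r; a supremum
   argument on [0, 1] then propagates a 4r-chain of such points from x1 all
   along the path, and one last step reaches x0. *)
From HB Require Import structures.
From mathcomp Require Import all_boot all_order all_algebra.
From mathcomp Require Import all_classical all_reals all_analysis.
From mathcomp Require Import lra zify.
Import Order.TTheory GRing.Theory Num.Theory.
Import numFieldNormedType.Exports.
Local Open Scope classical_set_scope.
Local Open Scope ring_scope.
Set Implicit Arguments. Unset Strict Implicit.

Section EuclideanDistance.
Variable R : realType.
Implicit Types p q w : R * R.

Lemma eucl_distC p q : eucl_dist p q = eucl_dist q p.
Proof. by rewrite /eucl_dist -(opprB p.1) -(opprB p.2) !sqrrN. Qed.

Lemma eucl_distxx p : eucl_dist p p = 0.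
Proof. by rewrite /eucl_dist !subrr expr0n /= addr0 sqrtr0. Qed.

Lemma cauchy_schwarz2 (u1 u2 v1 v2 : R) :
  u1 * v1 + u2 * v2 <= Num.sqrt (u1 ^+ 2 + u2 ^+ 2) * Num.sqrt (v1 ^+ 2 + v2 ^+ 2).
Proof.
rewrite -sqrtrM; last by rewrite addr_ge0 // sqr_ge0.
have [dot_le0|dot_gt0] := lerP (u1 * v1 + u2 * v2) 0.
  exact: le_trans dot_le0 (sqrtr_ge0 _).
rewrite -(ger0_norm (ltW dot_gt0)) -sqrtr_sqr ler_sqrt; last first.
  by rewrite mulr_ge0 // addr_ge0 // sqr_ge0.
have : 0 <= (u1 * v2 - u2 * v1) ^+ 2 by rewrite sqr_ge0.
nra.
Qed.

Lemma eucl_dist_triangle p q w : eucl_dist p w <= eucl_dist p q + eucl_dist q w.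
Proof.
rewrite /eucl_dist.
set a := Num.sqrt ((p.1 - q.1) ^+ 2 + _); set b := Num.sqrt ((q.1 - w.1) ^+ 2 + _).
have a_ge0 : 0 <= a by exact: sqrtr_ge0.
have b_ge0 : 0 <= b by exact: sqrtr_ge0.
have a2 : a ^+ 2 = (p.1 - q.1) ^+ 2 + (p.2 - q.2) ^+ 2.
  by rewrite sqr_sqrtr // addr_ge0 // sqr_ge0.
have b2 : b ^+ 2 = (q.1 - w.1) ^+ 2 + (q.2 - w.2) ^+ 2.
  by rewrite sqr_sqrtr // addr_ge0 // sqr_ge0.
have := cauchy_schwarz2 (p.1 - q.1) (p.2 - q.2) (q.1 - w.1) (q.2 - w.2).
rewrite -/a -/b => dot_le.
rewrite -(ger0_norm (addr_ge0 a_ge0 b_ge0)) -sqrtr_sqr ler_sqrt; last first.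
  by rewrite sqr_ge0.
rewrite -[p.1 - w.1](subrKA q.1) -[p.2 - w.2](subrKA q.2).
nra.
Qed.

Lemma eucl_dist_lt_coord p q (e : R) :
  `|p.1 - q.1| < e / 2 -> `|p.2 - q.2| < e / 2 -> eucl_dist p q < e.
Proof.
move=> lt1 lt2.
have e_gt0 : 0 < e by have := normr_ge0 (p.1 - q.1); lra.
rewrite /eucl_dist -(ger0_norm (ltW e_gt0)) -sqrtr_sqr ltr_sqrt ?exprn_gt0 //.
rewrite -(real_normK (num_real (p.1 - q.1))) -(real_normK (num_real (p.2 - q.2))).
have := normr_ge0 (p.1 - q.1); have := normr_ge0 (p.2 - q.2).
nra.
Qed.

Lemma dist_set_le_near x A (c e : R) : (dist_set x A <= c%:E)%E -> 0 < e ->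
  exists2 a, A a & eucl_dist x a < c + e.
Proof.
move=> dist_le e_gt0.
have : (dist_set x A < (c + e)%:E)%E.
  by apply: le_lt_trans dist_le _; rewrite lte_fin; lra.
by move=> /ereal_inf_lt [_ [a Aa <-]]; rewrite lte_fin; exists a.
Qed.

Lemma near_dist_set_le x A a (c : R) :
  A a -> eucl_dist x a <= c -> (dist_set x A <= c%:E)%E.
Proof.
move=> Aa dist_le; apply: le_trans (_ : ((eucl_dist x a)%:E <= _)%E).
  by apply: ereal_inf_lbound; exists a.
by rewrite lee_fin.
Qed.

End EuclideanDistance.

Lemma within_continuous_eucl_dist (R : realType) (g : R -> R * R) (A : set R)
    (s e : R) :
  {within A, continuous g} -> A s -> 0 < e ->
  exists2 d : R, 0 < d &
    forall t, A t -> `|t - s| < d -> eucl_dist (g t) (g s) < e.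
Proof.
move=> g_cont As e_gt0.
have e2_gt0 : 0 < e / 2 by lra.
have : within A (nbhs s) [set t | ball (g s) (e / 2) (g t)].
  have := g_cont s _ (nbhsx_ballx (g s) _ e2_gt0).
  by rewrite (nbhs_subspace_in As).
move=> /nbhs_ballP [d d_gt0 near_s]; exists d => // t At ts.
have /near_s/(_ At) [/= lt1 lt2] : ball s d t by rewrite /ball /= distrC.
by apply: eucl_dist_lt_coord; rewrite distrC.
Qed.

Lemma unit_interval_induction (R : realType) (P : R -> Prop) : P 0 ->
  (forall s, 0 <= s <= 1 -> exists2 d, 0 < d &
     forall t u, 0 <= t <= 1 -> 0 <= u <= 1 ->
       `|t - s| < d -> `|u - s| < d -> P t -> P u) ->
  P 1.
Proof.
move=> P0 P_local.
pose S := [set t : R | 0 <= t <= 1 /\ forall u, 0 <= u <= t -> P u].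
have S0 : S 0.
  split; first by rewrite lexx ler01.
  by move=> u /andP[u_ge0 u_le0]; have -> : u = 0 by apply/eqP; rewrite eq_le u_le0.
have S_sup : has_sup S by split; [exists 0 | exists 1 => t [/andP[_ ->]]].
set c := sup S.
have c_ge0 : 0 <= c by apply: sup_upper_bound.
have c_le1 : c <= 1 by apply: ge_sup; [exists 0 | move=> t [/andP[_ ->]]].
have [d d_gt0 Pd] := P_local c (ltac:(by rewrite c_ge0 c_le1)).
have [t [t01 Pt] ct] := sup_adherent d_gt0 S_sup; rewrite -/c in ct.
have tc : t <= c by apply: sup_upper_bound.
have /andP[t_ge0 t_le1] := t01.
have P_beyond u : 0 <= u <= 1 -> t <= u -> u < c + d -> P u.
  move=> u01 tu uc; have /andP[u_ge0 u_le1] := u01.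
  apply: (Pd t u t01 u01); rewrite ?ltr_distl; try by apply/andP; lra.
  by apply: Pt; rewrite t_ge0 lexx.
have [c_near1|c_far1] := lerP 1 (c + d / 2).
  by apply: P_beyond; rewrite ?ler01 ?lexx //; lra.
suff : S (c + d / 2) by move/(sup_upper_bound S_sup); rewrite -/c; lra.
split; first by apply/andP; lra.
move=> u /andP[u_ge0 u_le]; have [ut|tu] := lerP u t; first by apply: Pt; rewrite u_ge0.
by apply: P_beyond; [apply/andP; split | |]; lra.
Qed.

Section Chains.
Variables (R : realType) (G B : set (R * R)) (r : R).

Definition chain (a z : R * R) : Prop :=
  exists (N : nat) (x : nat -> R * R),
    (1 <= N)%N /\ x 1%N = a /\ x N.+1 = z /\
    (forall j, (2 <= j <= N)%N -> G (x j) /\ B (x j)) /\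
    (forall j, (1 <= j <= N)%N -> eucl_dist (x j) (x j.+1) <= 4 * r).

Lemma chain_step a z : eucl_dist a z <= 4 * r -> chain a z.
Proof.
move=> az; exists 1%N, (fun j => if j == 2%N then z else a).
split=> //; split=> //; split=> //.
split=> j /andP[j_ge j_le]; first lia.
by have -> : j = 1%N by lia.
Qed.

Lemma chain_rcons a y z : chain a y -> G y -> B y ->
  eucl_dist y z <= 4 * r -> chain a z.
Proof.
move=> [N [x [N_ge1 [xa [xy [x_in x_dist]]]]]] Gy By yz.
exists N.+1, (fun j => if j == N.+2 then z else x j).
split; first lia.
split=> //; split; first by rewrite eqxx.
split=> j /andP[j_ge j_le]; have -> : (j == N.+2) = false by apply/eqP; lia.
  have [->|jN] := eqVneq j N.+1; first by rewrite xy.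
  by apply: x_in; apply/andP; lia.
have [->|jN] := eqVneq j N.+1; first by rewrite eqxx xy.
have -> : (j.+1 == N.+2) = false by apply/eqP; lia.
by apply: x_dist; apply/andP; lia.
Qed.

End Chains.

Section ChainAlongPath.
Variables (R : realType) (E G : set (R * R)) (r : R).
Hypotheses (r_gt0 : 0 < r) (G_covers : Bnbhd E r `<=` Bnbhd G r).

Let chain2 := chain G (Bnbhd E (2 * r)) r.

Lemma near_cover p : E p -> exists2 h, G h & eucl_dist p h < r + r / 4.
Proof.
(* [lra] ignores section hypotheses, so [r_gt0] is pushed explicitly. *)
move=> Ep; have r4_gt0 : 0 < r / 4 by have := r_gt0; lra.
apply: dist_set_le_near r4_gt0.
by apply/G_covers/(near_dist_set_le Ep); rewrite eucl_distxx ltW.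
Qed.

Lemma near_cover_in_B2 p h : E p -> eucl_dist p h < r + r / 4 ->
  Bnbhd E (2 * r) h.
Proof.
move=> Ep ph; apply: (near_dist_set_le Ep).
by rewrite eucl_distC; have := r_gt0; lra.
Qed.

Definition chained_near (x1 p : R * R) : Prop :=
  exists h, [/\ G h, eucl_dist p h < r + r / 4 & chain2 x1 h].

Lemma chained_near_step x1 p q : E p -> E q -> eucl_dist p q < r / 2 ->
  chained_near x1 p -> chained_near x1 q.
Proof.
move=> Ep Eq pq [h [Gh ph chain_h]].
have [h' Gh' qh'] := near_cover Eq.
exists h'; split=> //; apply: chain_rcons chain_h Gh (near_cover_in_B2 Ep ph) _.
have := eucl_dist_triangle h p h'; have := eucl_dist_triangle p q h'.
rewrite eucl_distC in ph; have := r_gt0; lra.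
Qed.

Lemma chained_near_path x1 (g : R -> R * R) :
  {within `[0, 1], continuous g} -> g @` `[0, 1] `<=` E ->
  chained_near x1 (g 0) -> chained_near x1 (g 1).
Proof.
move=> g_cont gE start.
have in01 (t : R) : 0 <= t <= 1 -> `[0, 1]%classic t by rewrite /= in_itv.
have Eg (t : R) : 0 <= t <= 1 -> E (g t) by move=> t01; apply: gE; exists t; first exact: in01.
apply: (unit_interval_induction (P := chained_near x1 \o g)) => // s s01.
have r4_gt0 : 0 < r / 4 by have := r_gt0; lra.
have [d d_gt0 near_s] := within_continuous_eucl_dist g_cont (in01 s s01) r4_gt0.
exists d => // t u t01 u01 ts us.
apply: chained_near_step; [exact: Eg | exact: Eg |].
have := near_s t (in01 t t01) ts; have := near_s u (in01 u u01) us.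
have := eucl_dist_triangle (g t) (g s) (g u); rewrite (eucl_distC (g u)); lra.
Qed.

End ChainAlongPath.

Theorem lemma4p3 (R : realType) (E : set (R * R)) (r : R) (G : set (R * R))
  (x0 x1 : R * R) :
  compact E -> path_connected_set E -> 0 < r ->
  max_dist_minimizer (Bnbhd E r) r G ->
  G x0 -> Bnbhd E (2 * r) x0 -> G x1 -> Bnbhd E (2 * r) x1 ->
  exists (N : nat) (x : nat -> R * R),
    (1 <= N)%N /\ x 1%N = x1 /\ x N.+1 = x0 /\
    (forall j, (2 <= j <= N)%N -> G (x j) /\ Bnbhd E (2 * r) (x j)) /\
    (forall j, (1 <= j <= N)%N -> eucl_dist (x j) (x j.+1) <= 4 * r).
Proof.
move=> _ E_path r_gt0 [_ [G_covers _]] _ Bx0 _ Bx1.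
have [e1 Ee1 x1e1] := dist_set_le_near Bx1 (ltac:(lra) : 0 < r / 2).
have [e0 Ee0 x0e0] := dist_set_le_near Bx0 (ltac:(lra) : 0 < r / 2).
have [g [g_cont [g0 [g1 gE]]]] := E_path e1 e0 Ee1 Ee0.
have start : chained_near E G r x1 (g 0).
  have [h Gh e1h] := near_cover r_gt0 G_covers Ee1.
  exists h; split; rewrite ?g0 //; apply: chain_step.
  by have := eucl_dist_triangle x1 e1 h; lra.
have [h [Gh e0h chain_h]] := chained_near_path r_gt0 G_covers g_cont gE start.
rewrite g1 in e0h.
apply: chain_rcons chain_h Gh (near_cover_in_B2 r_gt0 Ee0 e0h) _.
have := eucl_dist_triangle h e0 x0.
rewrite (eucl_distC h e0) (eucl_distC e0 x0); lra.
Qed.
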